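(* Let $X,Y,Z$ be spaces, let $r\colon Y\to Z$ be a surjective continuous map, and let $r_{\ast}\colon Q_{P}(X,Y)\to Q_{P}(X,Z)$ be the induced map $r_{\ast}(f)=r\circ f$. Then $r_{\ast}(Q_{P}(X,Y))$ is dense in $Q_{P}(X,Z)$.
   Context: A function $f\colon X\to Y$ between topological spaces is quasi-continuous at $x\in X$ if for every open $U\ni x$ and every open $V\ni f(x)$ there is a non-empty open $G\subseteq U$ with $f(G)\subseteq V$; $f$ is quasi-continuous if it is so at every point. $Q_{P}(X,Y)$ is the set of quasi-continuous functions $X\to Y$ with the topology of point-wise convergence, whose base consists of the sets $[x_1,\dots,x_n;U_1,\dots,U_n]=\{f: f(x_i)\in U_i,\ 1\le i\le n\}$ with $x_i\in X$, $U_i$ open in $Y$; similarly for $Q_P(X,Z)$. *)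

From HB Require Import structures.
From mathcomp Require Import all_boot all_order.
From mathcomp Require Import all_classical topology.
Set Implicit Arguments. Unset Strict Implicit. Unset Printing Implicit Defensive.
Local Open Scope classical_set_scope.

Definition quasi_continuous_at (X Y : topologicalType) (f : X -> Y) (x : X) :=
  forall (U : set X) (V : set Y), open U -> U x -> open V -> V (f x) ->
    exists G : set X, [/\ open G, G !=set0, G `<=` U & f @` G `<=` V].

Definition quasi_continuous (X Y : topologicalType) (f : X -> Y) :=
  forall x, quasi_continuous_at f x.

Arguments quasi_continuous : clear implicits.
Definition QP (X Y : topologicalType) : set (X -> Y) :=
  [set f | quasi_continuous X Y f].

Arguments QP : clear implicits.

(* the basic set [x_1,...,x_n; U_1,...,U_n] of the pointwise topology *)
Definition pw_basic (X Z : Type) (n : nat) (xs : 'I_n -> X) (Us : 'I_n -> set Z)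
  : set (X -> Z) := [set f | forall i, Us i (f (xs i))].

Definition dense_in_QP (X Z : topologicalType) (A : set (X -> Z)) :=
  forall (n : nat) (xs : 'I_n -> X) (Us : 'I_n -> set Z),
    (forall i, open (Us i)) ->
    (QP X Z `&` pw_basic xs Us) !=set0 -> (A `&` pw_basic xs Us) !=set0.

From HB Require Import structures.
From mathcomp Require Import all_boot all_order.
From mathcomp Require Import all_classical topology.
Set Implicit Arguments. Unset Strict Implicit. Unset Printing Implicit Defensive.
Local Open Scope classical_set_scope.

(* Let g be quasi-continuous with g x_i in U_i, and A_i the interior of
   g^-1(U_i).  The interiors of the Venn regions of the A_i are disjoint open
   cells with dense union, and quasi-continuity of g puts each x in the closure
   of a cell whose label contains every i with x_i = x.  Sending x to a fixed
   point c(x) of that cell makes c constant on a nonempty open piece of every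
   neighbourhood of x; hence s o g o c is quasi-continuous for any section s of
   r, and r o (s o g o c) = g o c lies in [x_1,...,x_n; U_1,...,U_n]. *)

Definition quasi_locally_constant (X : topologicalType) (T : Type) (f : X -> T) :=
  forall (x : X) (U : set X), open U -> U x ->
    exists G : set X, [/\ open G, G !=set0, G `<=` U & forall y, G y -> f y = f x].

Lemma quasi_locally_constant_comp (X : topologicalType) (T T' : Type)
    (phi : T -> T') (f : X -> T) :
  quasi_locally_constant f -> quasi_locally_constant (phi \o f).
Proof.
move=> qf x U oU Ux; have [G [oG G0 GU fG]] := qf x U oU Ux.
by exists G; split => // y Gy /=; rewrite fG.
Qed.

Lemma quasi_locally_constant_quasi_continuous (X Y : topologicalType) (f : X -> Y) :
  quasi_locally_constant f -> quasi_continuous X Y f.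
Proof.
move=> qf x U V oU Ux oV Vfx; have [G [oG G0 GU fG]] := qf x U oU Ux.
by exists G; split => // _ [y Gy <-]; rewrite fG.
Qed.

Lemma quasi_continuous_comp (X Y Z : topologicalType) (r : Y -> Z) (f : X -> Y) :
  continuous r -> quasi_continuous X Y f -> quasi_continuous X Z (r \o f).
Proof.
move=> rc qf x U V oU Ux oV Vrfx.
have orV : open (r @^-1` V) by move/continuousP: rc; apply.
have [G [oG G0 GU fG]] := qf x U _ oU Ux orV Vrfx.
by exists G; split => // _ [y Gy <-]; apply: (fG (f y)); exists y.
Qed.

Lemma open_fin_bigcap (X : topologicalType) (I : finType) (P : set I) (A : I -> set X) :
  (forall i, P i -> open (A i)) -> open (\bigcap_(i in P) A i).
Proof.
move=> oA; rewrite openE => x Ax.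
apply: filter_forall => i; have [Pi|nPi] := pselect (P i); last by apply: nearW.
by apply: filterS (open_nbhs_nbhs (conj (oA i Pi) (Ax i Pi))) => y Ay _.
Qed.

Lemma closure_fin_bigcup (X : topologicalType) (I : finType) (P : set I)
    (E : I -> set X) (x : X) :
  closure (\bigcup_(i in P) E i) x -> exists i, P i /\ closure (E i) x.
Proof.
move=> clE; apply: contrapT => nclE.
have : \forall y \near x, forall i, P i -> ~ E i y.
  apply: filter_forall => i; have [Pi|nPi] := pselect (P i); last by apply: nearW.
  have : (~` E i)° x by rewrite interiorC => clEi; apply: nclE; exists i.
  by apply: filterS => y nEy _.
by move=> /clE [y [[i Pi Eiy] /(_ i Pi)]].
Qed.

Lemma xget_nonempty_default (T : choiceType) (x0 x1 : T) (P : set T) :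
  P !=set0 -> xget x0 P = xget x1 P.
Proof.
move=> [x Px]; rewrite /xget; case: pselect => // nP.
by exfalso; apply: nP; exists x; apply/asboolP.
Qed.

Section VennCells.
Variables (X : topologicalType) (I : finType) (A : I -> set X).

Definition venn_cell (S : {set I}) : set X := [set x | forall i, A i x <-> i \in S]°.

Lemma open_venn_cell S : open (venn_cell S).
Proof. exact: open_interior. Qed.

Lemma venn_cellP S x i : venn_cell S x -> A i x <-> i \in S.
Proof. by move=> /interior_subset; apply. Qed.

Lemma venn_cell_inj S T x : venn_cell S x -> venn_cell T x -> S = T.
Proof.
move=> ESx ETx; apply/setP => i; apply/idP/idP.
  by move=> /(venn_cellP i ESx)/(venn_cellP i ETx).
by move=> /(venn_cellP i ETx)/(venn_cellP i ESx).
Qed.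

Lemma venn_cell_selector (S : X -> {set I}) :
    (forall x, closure (venn_cell (S x)) x) ->
  exists c : X -> X, quasi_locally_constant c /\ forall x, venn_cell (S x) (c x).
Proof.
move=> clS; have ES0 x : venn_cell (S x) !=set0.
  by have [y [ESy _]] := clS x setT filterT; exists y.
exists (fun x => xget x (venn_cell (S x))); split => [x U oU Ux|x]; last first.
  exact: xgetPex (ES0 x).
exists (U `&` venn_cell (S x)); split.
- exact: openI (open_venn_cell _).
- by have [y [ESy Uy]] := clS x U (open_nbhs_nbhs (conj oU Ux)); exists y.
- by move=> y [].
move=> y [_ ESxy].
have [z [ESyz ESxz]] := clS y _ (open_nbhs_nbhs (conj (open_venn_cell (S x)) ESxy)).
by rewrite (venn_cell_inj ESyz ESxz); apply: xget_nonempty_default.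
Qed.

Hypothesis oA : forall i, open (A i).

(* A maximal S for which O meets all A i, i \in S, yields an open piece of O
   missing every other A i. *)
Lemma venn_cell_meets O : open O -> O !=set0 -> exists S, (O `&` venn_cell S) !=set0.
Proof.
move=> oO O0; pose W (S : {set I}) := O `&` \bigcap_(i in [set i | i \in S]) A i.
pose P (S : {set I}) := `[< W S !=set0 >].
have [|S /maxsetP[/asboolP [x Wx] maxS] _] := @maxset_exists _ P finset.set0.
  by apply/asboolP; case: O0 => x Ox; exists x; split => // i /=; rewrite finset.in_set0.
have oW : open (W S) by apply: openI => //; apply: open_fin_bigcap => i _; exact: oA.
exists S, x; split; first by case: Wx.
have : W S `<=` [set x | forall i, A i x <-> i \in S].
  move=> y [Oy Ay] i; split => [Aiy|]; last exact: Ay.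
  apply/negPn/negP => iS.
  have PiS : P (i |: S).
    apply/asboolP; exists y; split => // j /=.
    by rewrite finset.in_setU1 => /orP[/eqP->|/Ay].
  by move: (setU11 i S); rewrite (maxS _ PiS (finset.subsetUr _ _)) (negbTE iS).
move=> /interiorS; apply; by move/interior_id: oW ->.
Qed.

End VennCells.

Section QuasiContinuousSelector.
Variables (X Z : topologicalType) (I : finType) (xs : I -> X) (Us : I -> set Z).
Variable g : X -> Z.
Hypotheses (oUs : forall i, open (Us i)) (qg : quasi_continuous X Z g)
  (gUs : forall i, Us i (g (xs i))).

Let A i := (g @^-1` Us i)°.

Lemma exists_venn_label x :
  exists S : {set I}, (forall i, xs i = x -> i \in S) /\ closure (venn_cell A S) x.
Proof.
have oA i : open (A i) by exact: open_interior.
apply: closure_fin_bigcup => B /nbhs_interior B'x.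
pose V := \bigcap_(i in [set i | xs i = x]) Us i.
have oV : open V by apply: open_fin_bigcap => i _; exact: oUs.
have Vgx : V (g x) by move=> i /= <-.
have [G [oG G0 GB gG]] := qg (@open_interior _ B) (nbhs_singleton B'x) oV Vgx.
have [S [y [Gy ESy]]] := venn_cell_meets oA oG G0.
exists y; split; last exact: interior_subset (GB _ Gy).
exists S => // i xsi; apply/(venn_cellP i ESy).
have /interior_id GE := oG.
apply: (@interiorS _ G); last by rewrite GE.
by move=> u Gu; apply: gG xsi; exists u.
Qed.

Lemma quasi_continuous_selector :
  exists c : X -> X, quasi_locally_constant c /\ forall i, Us i (g (c (xs i))).
Proof.
have [S HS] := choice exists_venn_label.
have [c [qc cS]] := venn_cell_selector (fun x => (HS x).2).
exists c; split => // i; have [_ ASi] := venn_cellP i (cS (xs i)).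
exact: interior_subset (ASi ((HS (xs i)).1 i erefl)).
Qed.

End QuasiContinuousSelector.

Theorem mainTheorem12 (X Y Z : topologicalType) (r : Y -> Z) :
  continuous r -> (forall z : Z, exists y : Y, r y = z) ->
  let rstar := fun f : X -> Y => r \o f in
  rstar @` QP X Y `<=` QP X Z /\ dense_in_QP (rstar @` QP X Y).
Proof.
move=> rc r_surj rstar; split.
  by move=> _ [f qf <-]; apply: quasi_continuous_comp.
move=> n xs Us oUs [g [qg gUs]].
have [sec secK] := choice r_surj.
have [c [qc cUs]] := quasi_continuous_selector oUs qg gUs.
exists (g \o c); split => [|i]; last exact: cUs.
exists (sec \o g \o c).
  exact/quasi_locally_constant_quasi_continuous/quasi_locally_constant_comp.
by apply/funext => x; rewrite /rstar /= secK.
Qed.
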